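(* Let $R$ be a $*$-ring. Then the following are equivalent: (1) $R$ is strongly $J$-$*$-clean. (2) $R$ is uniquely clean and $a-a^*\in J(R)$ for every $a\in R$. (3) $R$ is uniquely clean and $a+a^*\in J(R)$ for every $a\in R$.
   Context: All rings are associative with identity. A $*$-ring is a ring $R$ with an involution $*$, i.e. a map $a\mapsto a^*$ with $(a+b)^*=a^*+b^*$, $(ab)^*=b^*a^*$, $(a^* )^*=a$. $J(R)$ denotes the Jacobson radical of $R$. A projection is an element $e$ with $e^2=e=e^*$. $R$ is strongly $J$-$*$-clean if every $a\in R$ can be written $a=e+u$ with $e$ a projection, $u\in J(R)$ and $ae=ea$. $R$ is uniquely clean if every element of $R$ can be written uniquely as the sum of an idempotent and a unit. *)

From HB Require Import structures.
From mathcomp Require Import all_boot all_algebra.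
Set Implicit Arguments. Unset Strict Implicit. Unset Printing Implicit Defensive.
Import GRing.Theory.
Local Open Scope ring_scope.

Definition involution (R : pzRingType) (s : R -> R) : Prop :=
  [/\ forall a b, s (a + b) = s a + s b,
      forall a b, s (a * b) = s b * s a &
      forall a, s (s a) = a].

Definition left_ideal (R : pzRingType) (I : R -> Prop) : Prop :=
  [/\ I 0,
      forall x y, I x -> I y -> I (x + y),
      forall x, I x -> I (- x) &
      forall r x, I x -> I (r * x)].

Definition maximal_left_ideal (R : pzRingType) (I : R -> Prop) : Prop :=
  [/\ left_ideal I,
      exists x, ~ I x &
      forall K : R -> Prop, left_ideal K -> (forall x, I x -> K x) ->
        (forall x, K x) \/ (forall x, K x <-> I x)].

Definition in_jacobson (R : pzRingType) (x : R) : Prop :=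
  forall I : R -> Prop, maximal_left_ideal I -> I x.

Definition is_unit (R : pzRingType) (u : R) : Prop :=
  exists v, u * v = 1 /\ v * u = 1.

Definition idempotent (R : pzRingType) (e : R) : Prop := e * e = e.

Definition projection (R : pzRingType) (s : R -> R) (e : R) : Prop :=
  e * e = e /\ s e = e.

Definition strongly_J_star_clean (R : pzRingType) (s : R -> R) : Prop :=
  forall a : R, exists e u : R,
    [/\ projection s e, in_jacobson u, a = e + u & a * e = e * a].

(* every element is uniquely the sum of an idempotent and a unit;
   since u = a - e, uniqueness of the pair (e,u) is uniqueness of e *)
Definition uniquely_clean (R : pzRingType) : Prop :=
  forall a : R, exists! e : R, idempotent e /\ is_unit (a - e).

From mathcomp Require Import all_boot all_algebra.
From mathcomp Require Import boolp classical_sets.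
Import GRing.Theory.
Set Implicit Arguments. Unset Strict Implicit. Unset Printing Implicit Defensive.
Local Open Scope ring_scope.

(* J(R) is handled through its characterization: x is in J(R) iff 1 - r x is
   a unit for every r (one half needs Zorn's lemma for maximal left ideals).
   In a uniquely clean ring every idempotent is central, and 1 + u lies in
   J(R) for every unit u: a nonzero clean idempotent of 1 - r (1 + u) would cut
   out a corner in which some element has two clean decompositions.  Hence if
   a = f + u is clean, a - (1 - f) = f (1 + u) - (1 - f) (1 - u) lies in J(R),
   and 2 lies in J(R), which makes (2) and (3) equivalent; when moreover
   a - a^* is in J(R), the idempotent 1 - f is forced to be a projection.
   Conversely, in a strongly J-*-clean ring every idempotent is a projection,
   hence central, and a = p + j gives the clean decomposition
   a = (1 - p) + (2 p - 1 + j), unique because idempotents in J(R) vanish. *)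

Section Units.
Variable R : pzRingType.
Implicit Types a b u v : R.

Lemma is_unit1 : is_unit (1 : R).
Proof. by exists 1; rewrite mulr1. Qed.

Lemma is_unitM u v : is_unit u -> is_unit v -> is_unit (u * v).
Proof.
move=> [u' [uu' u'u]] [v' [vv' v'v]]; exists (v' * u'); split.
  by rewrite mulrA -(mulrA u) vv' mulr1 uu'.
by rewrite mulrA -(mulrA v') u'u mulr1 v'v.
Qed.

Lemma is_unitN u : is_unit u -> is_unit (- u).
Proof. by move=> [u' [uu' u'u]]; exists (- u'); rewrite !mulrNN. Qed.

(* Jacobson's lemma: if v inverts 1 - ab, then 1 + bva inverts 1 - ba. *)
Lemma is_unit_1subC a b : is_unit (1 - a * b) -> is_unit (1 - b * a).
Proof.
move=> [v [abv vab]]; exists (1 + b * v * a).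
have abvE : a * b * v = v - 1 by rewrite -abv mulrBl mul1r opprB addrC subrK.
have vabE : v * a * b = v - 1 by rewrite -vab mulrBr mulr1 opprB addrC subrK -mulrA.
split.
  have e : b * a * (b * v * a) = b * v * a - b * a.
    by rewrite -!mulrA (mulrA a) (mulrA (a * b)) abvE mulrBl mul1r mulrBr.
  by rewrite mulrBl !mulrDr !mul1r mulr1 e [_ + (_ - _)]addrC subrK addrK.
have e : b * v * a * (b * a) = b * v * a - b * a.
  by rewrite !mulrA -(mulrA b v) -(mulrA b (v * a)) vabE mulrBr mulr1 mulrBl mulrA.
by rewrite mulrBr !mulrDl !mulr1 mul1r e [_ + (_ - _)]addrC subrK addrK.
Qed.

End Units.

Section Jacobson.
Variable R : pzRingType.
Implicit Types x y r : R.

Lemma exists_maximal_left_ideal (L : R -> Prop) : left_ideal L -> ~ L 1 ->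
  exists M, maximal_left_ideal M /\ forall x, L x -> M x.
Proof.
move=> [L0 LD LN LM] nL1.
pose P (A : set R) := [/\ ~ A 1, forall x y, A x -> A y -> A (x + y),
  forall x, A x -> A (- x), forall r x, A x -> A (r * x) &
  (A !=set0)%classic -> (L `<=` A)%classic].
have [A [[nA1 AD AN AM AL] Amax]] :
    exists A, P A /\ forall B, (A `<` B)%classic -> ~ P B.
  apply: Zorn_bigcup => F FP Ftot.
  have FPX X : F X -> P X by apply: FP.
  split.
  - by case=> X /FPX[].
  - move=> x y [X FX Xx] [Y FY Yy].
    have [XY|YX] := Ftot X Y FX FY.
      by exists Y => //; case: (FPX Y FY) => _ D _ _ _; exact: D (XY _ Xx) Yy.
    by exists X => //; case: (FPX X FX) => _ D _ _ _; exact: D Xx (YX _ Yy).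
  - by move=> x [X FX Xx]; exists X => //; case: (FPX X FX) => _ _ N _ _; exact: N.
  - by move=> r x [X FX Xx]; exists X => //; case: (FPX X FX) => _ _ _ M _; exact: M.
  - move=> [x [X FX Xx]] l Ll; exists X => //.
    by case: (FPX X FX) => _ _ _ _ XL; apply: XL => //; exists x.
have PL : P L by split => // _.
have LA : (L `<=` A)%classic.
  apply: AL; apply: contrapT => nA; apply: (Amax L) => //; split.
    by move=> x Ax; exfalso; apply: nA; exists x.
  by move=> LA; apply: nA; exists 0; apply: LA.
exists A; split => //; split.
- by split => //; apply: LA.
- by exists 1.
- move=> K [K0 KD KN KM] AK.
  case: (pselect (K 1)) => [K1|nK1].
    by left => x; rewrite -(mulr1 x); apply: KM.
  right => x; split; last exact: AK.
  case: (pselect (K `<=` A)%classic) => [KA|nKA]; first exact: KA.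
  by exfalso; apply: (Amax K) => //; split => // _ l /LA; apply: AK.
Qed.

Lemma in_jacobsonMl r x : in_jacobson x -> in_jacobson (r * x).
Proof. by move=> Jx I MI; case: (MI) => [[_ _ _ IM] _ _]; apply: IM; apply: Jx. Qed.

Lemma in_jacobson_left_inv y : in_jacobson y -> exists u, u * (1 - y) = 1.
Proof.
move=> Jy; apply: contrapT => nu.
pose L z := exists c, z = c * (1 - y).
have [M [MI LM]] :
    exists M, maximal_left_ideal M /\ forall z, L z -> M z.
  apply: exists_maximal_left_ideal; last by move=> [c c1]; apply: nu; exists c.
  split; first by exists 0; rewrite mul0r.
  - by move=> a b [c ->] [d ->]; exists (c + d); rewrite mulrDl.
  - by move=> a [c ->]; exists (- c); rewrite mulNr.
  - by move=> r a [c ->]; exists (r * c); rewrite mulrA.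
case: (MI) => [[_ MD _ MM] [x nMx] _].
have M1 : M 1.
  rewrite -(subrK y 1) addrC; apply: MD; first exact: Jy MI.
  by apply: LM; exists 1; rewrite mul1r.
by apply: nMx; rewrite -(mulr1 x); apply: MM.
Qed.

(* The left inverse u of 1 - y is itself 1 - (-u) y, so it has a left inverse too. *)
Lemma in_jacobson_unit y : in_jacobson y -> is_unit (1 - y).
Proof.
move=> Jy; have [u uy] := in_jacobson_left_inv Jy.
have uE : 1 - (- u) * y = u by rewrite mulNr opprK -{1}uy mulrBr mulr1 subrK.
have [w] := in_jacobson_left_inv (in_jacobsonMl (- u) Jy); rewrite uE => wu.
have wE : w = 1 - y by rewrite -[w]mulr1 -{1}uy mulrA wu mul1r.
by exists u; split => //; rewrite -wE.
Qed.

Definition Jrad x := forall r, is_unit (1 - r * x).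

Lemma in_jacobsonE x : in_jacobson x <-> Jrad x.
Proof.
split=> [Jx r|Jx I [[I0 ID IN IM] _ Imax]].
  exact: in_jacobson_unit (in_jacobsonMl r Jx).
pose K z := exists m c, I m /\ z = m + c * x.
have KL : left_ideal K.
  split; first by exists 0, 0; rewrite mul0r addr0.
  - move=> _ _ [m [c [Im ->]]] [m' [c' [Im' ->]]]; exists (m + m'), (c + c').
    by rewrite mulrDl addrACA; split => //; apply: ID.
  - move=> _ [m [c [Im ->]]]; exists (- m), (- c).
    by rewrite opprD mulNr; split => //; apply: IN.
  - move=> r _ [m [c [Im ->]]]; exists (r * m), (r * c).
    by rewrite mulrDr mulrA; split => //; apply: IM.
have IK z : I z -> K z by move=> Iz; exists z, 0; rewrite mul0r addr0.
case: (Imax K KL IK) => [Kall|KI]; last by apply/KI; exists 0, 1; rewrite add0r mul1r.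
have [m [c [Im m1]]] := Kall 1.
have [v [_ vm]] := Jx c; have mE : 1 - c * x = m by rewrite m1 addrK.
by rewrite mE in vm; rewrite -(mulr1 x) -vm mulrA; apply: IM.
Qed.

Lemma JradMl r x : Jrad x -> Jrad (r * x).
Proof. by move=> Jx r'; rewrite mulrA; apply: Jx. Qed.

Lemma JradMr x r : Jrad x -> Jrad (x * r).
Proof. by move=> Jx r'; rewrite mulrA; apply/is_unit_1subC; rewrite mulrA; apply: Jx. Qed.

Lemma JradD x y : Jrad x -> Jrad y -> Jrad (x + y).
Proof.
move=> Jx Jy r; have [v [xv _]] := Jx r.
have -> : 1 - r * (x + y) = (1 - r * x) * (1 - v * r * y).
  by rewrite mulrBr mulr1 !mulrA xv mul1r mulrDr opprD addrA.
by apply: is_unitM; [apply: Jx | apply: Jy].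
Qed.

Lemma JradN x : Jrad x -> Jrad (- x).
Proof. by rewrite -mulN1r; apply: JradMl. Qed.

Lemma JradB x y : Jrad x -> Jrad y -> Jrad (x - y).
Proof. by move=> Jx /JradN; apply: JradD. Qed.

End Jacobson.

Section Idempotents.
Variable R : pzRingType.
Implicit Types e f k n x : R.

Lemma idempotent_mulrC e : idempotent e -> e * (1 - e) = 0.
Proof. by move=> ee; rewrite mulrBr mulr1 ee subrr. Qed.

Lemma idempotent_mulCr e : idempotent e -> (1 - e) * e = 0.
Proof. by move=> ee; rewrite mulrBl mul1r ee subrr. Qed.

Lemma idempotentC e : idempotent e -> idempotent (1 - e).
Proof. by move=> ee; rewrite /idempotent mulrBr mulr1 idempotent_mulCr // subr0. Qed.

Lemma idempotentM e f : idempotent e -> idempotent f -> e * f = f * e ->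
  idempotent (e * f).
Proof.
move=> ee ff ef; rewrite /idempotent -mulrA (mulrA f) -ef.
by rewrite !mulrA ee -mulrA ff.
Qed.

Lemma idempotentD_corner e n : idempotent e -> e * n = n -> n * e = 0 ->
  idempotent (e + n).
Proof.
move=> ee en ne; have nn : n * n = 0 by rewrite -{2}en mulrA ne mul0r.
by rewrite /idempotent mulrDl !mulrDr ee en ne nn !addr0.
Qed.

Lemma idempotent_Jrad_eq0 k : idempotent k -> Jrad k -> k = 0.
Proof.
move=> kk /(_ 1); rewrite mul1r => -[v [kv _]].
by rewrite -[k]mulr1 -kv mulrA idempotent_mulrC // mul0r.
Qed.

Lemma idempotent_unit_Jrad_eq0 k v j : idempotent k -> is_unit v -> Jrad j ->
  k * v = k * j -> k = 0.
Proof.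
move=> kk [v' [vv' _]] Jj kvj; apply: idempotent_Jrad_eq0 => //.
by rewrite -[k]mulr1 -vv' mulrA kvj; apply/JradMr/JradMl.
Qed.

Lemma idempotent_eq_Jrad e f : idempotent e -> idempotent f -> e * f = f * e ->
  Jrad (e - f) -> e = f.
Proof.
move=> ee ff ef Jef.
have ef0 : e * (1 - f) = 0.
  apply: idempotent_Jrad_eq0.
    exact: idempotentM ee (idempotentC ff) (commrB (commr1 e) ef).
  by rewrite mulrBr mulr1 -{1}ee -mulrBr; apply: JradMl.
have fe0 : f * (1 - e) = 0.
  apply: idempotent_Jrad_eq0.
    exact: idempotentM ff (idempotentC ee) (commrB (commr1 f) (esym ef)).
  by rewrite mulrBr mulr1 -{1}ff -mulrBr -opprB mulrN; apply/JradN/JradMl.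
move: ef0 fe0; rewrite !mulrBr !mulr1 => /subr0_eq eE /subr0_eq fE.
by rewrite eE ef -fE.
Qed.

Lemma commute_of_corners e x : e * x * (1 - e) = 0 -> (1 - e) * x * e = 0 ->
  e * x = x * e.
Proof.
rewrite mulrBr mulr1 !mulrBl !mul1r => /subr0_eq exe /subr0_eq xee.
by rewrite exe xee.
Qed.

Lemma idempotents_central :
    (forall e n, idempotent e -> e * n = n -> n * e = 0 -> n = 0) ->
  forall e x, idempotent e -> e * x = x * e.
Proof.
move=> corner0 e x ee; apply: commute_of_corners.
  apply: (corner0 e) => //; first by rewrite !mulrA ee.
  by rewrite -mulrA idempotent_mulCr // mulr0.
apply: (corner0 (1 - e)); first exact: idempotentC.
  by rewrite !mulrA (idempotentC ee).
by rewrite -(mulrA _ e) idempotent_mulrC // mulr0.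
Qed.

Lemma complement_idempotent_eq p f j : idempotent p -> idempotent f ->
  f * p = p * f -> Jrad j -> is_unit (p + j - f) -> f = 1 - p.
Proof.
move=> pp ff fp Jj v_unit.
have fp0 : f * p = 0.
  apply: (idempotent_unit_Jrad_eq0 (idempotentM ff pp fp) v_unit Jj).
  rewrite mulrBr mulrDr -mulrA pp -(mulrA f p f) -fp mulrA ff.
  by rewrite addrAC subrr add0r.
have cpf : (1 - p) * f = f * (1 - p) := esym (commrB (commr1 f) fp).
have cfp : (1 - f) * (1 - p) = (1 - p) * (1 - f).
  exact/commrB/commr_sym/commrB/commr_sym/fp/commr1/commr1.
have fp1 : (1 - f) * (1 - p) = 0.
  apply: (idempotent_unit_Jrad_eq0 _ v_unit Jj).
    exact: idempotentM (idempotentC ff) (idempotentC pp) cfp.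
  rewrite mulrBr mulrDr -mulrA idempotent_mulCr // mulr0 add0r.
  by rewrite -(mulrA _ _ f) cpf mulrA idempotent_mulCr // mul0r subr0.
by move: fp1; rewrite mulrBl mul1r mulrBr mulr1 fp0 subr0 => /subr0_eq.
Qed.

Lemma corner_mul k a b : idempotent k -> (forall x, k * x = x * k) ->
  (1 - k + k * a) * (1 - k + k * b) = 1 - k + k * (a * b).
Proof.
move=> kk kC; have mC x : (1 - k) * x = x * (1 - k).
  by apply/commr_sym/commrB; [apply: commr1 | exact/esym/kC].
rewrite mulrDl (mulrDr (1 - k)) (mulrDr (k * a)) (idempotentC kk).
rewrite (mulrA (1 - k) k) idempotent_mulCr // mul0r addr0.
rewrite -mC (mulrA (1 - k) k) idempotent_mulCr // mul0r add0r.
by rewrite -mulrA (mulrA a) -kC !mulrA kk.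
Qed.

End Idempotents.

Section UniquelyClean.
Variable R : pzRingType.
Hypothesis UC : uniquely_clean R.
Implicit Types e k n u x y z : R.

(* e + n + 1 is clean both as (e + n) + 1 and as e + (1 + n). *)
Lemma uc_corner_eq0 e n : idempotent e -> e * n = n -> n * e = 0 -> n = 0.
Proof.
move=> ee en ne; have nn : n * n = 0 by rewrite -{2}en mulrA ne mul0r.
have [f [_ uniq_f]] := UC (e + n + 1).
have fE : f = e + n.
  apply: uniq_f; split; first exact: idempotentD_corner.
  by rewrite addrC addKr; exact: is_unit1.
have fe : f = e.
  apply: uniq_f; split => //; rewrite addrAC (addrC e) addrK; exists (1 - n).
  rewrite mulrDl mulrBr mulrBl !mul1r !mulr1 nn subr0 mulrDr nn add0r mulr1.
  by rewrite addrAC subrr add0r addrC subrK.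
by apply: (addrI e); rewrite -fE fe addr0.
Qed.

Lemma uc_central e x : idempotent e -> e * x = x * e.
Proof. by move=> ee; apply: (idempotents_central uc_corner_eq0). Qed.

(* y z is idempotent, hence central: y z = (y z) (z y) = z (y z) y = 1. *)
Lemma uc_unit_of_left_inv y z : z * y = 1 -> is_unit y.
Proof.
move=> zy; exists z; split => //.
have yz : idempotent (y * z) by rewrite /idempotent mulrA -(mulrA y) zy mulr1.
by rewrite -[y * z]mulr1 -zy mulrA (uc_central z yz) mulrA zy mul1r.
Qed.

(* If y and y - 1 are both invertible in the corner k R, then the element
   (1 - k) + k y has the two clean decompositions 0 + _ and k + _. *)
Lemma uc_corner_units_eq0 k y z1 z2 : idempotent k ->
  z1 * y * k = k -> z2 * (y - 1) * k = k -> k = 0.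
Proof.
move=> kk z1y z2y.
have corner_unit z t : z * t * k = k -> is_unit (1 - k + k * t).
  move=> ztk; apply: (@uc_unit_of_left_inv _ (1 - k + k * z)).
  rewrite corner_mul //; last by move=> x; apply: uc_central.
  by rewrite (uc_central (z * t) kk) ztk subrK.
have [f [_ uniq_f]] := UC (1 - k + k * y).
have f0 : f = 0.
  apply: uniq_f; split; first by rewrite /idempotent mul0r.
  by rewrite subr0; exact: corner_unit z1y.
have fk : f = k.
  apply: uniq_f; split => //.
  have -> : 1 - k + k * y - k = 1 - k + k * (y - 1) by rewrite mulrBr mulr1 addrA.
  exact: corner_unit z2y.
by rewrite -fk f0.
Qed.

(* If g is the clean idempotent of t = 1 - r (1 + u), then on the corner g R
   both 1 + u and u are invertible, so g = 0 and t is a unit. *)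
Lemma uc_Jrad_add1 u : is_unit u -> Jrad (1 + u).
Proof.
move=> [u' [_ u'u]] r; set t := 1 - r * (1 + u).
have [g [[gg [w' [ww' w'w]]] _]] := UC t.
suff g0 : g = 0 by move: ww' w'w; rewrite g0 subr0; exists w'.
apply: (uc_corner_units_eq0 (y := 1 + u) (z1 := - (w' * r)) (z2 := u')) => //.
  have wg : (t - g) * g = - (r * (1 + u) * g).
    by rewrite mulrBl gg /t mulrBl mul1r addrAC subrr add0r.
  have gE : g = w' * ((t - g) * g) by rewrite mulrA w'w mul1r.
  by rewrite [RHS]gE wg mulrN !mulrA !mulNr.
by rewrite (addrC 1) addrK u'u mul1r.
Qed.

Lemma uc_clean_Jrad a : exists e, idempotent e /\ Jrad (a - e).
Proof.
have [f [[ff u_unit] _]] := UC a; exists (1 - f); split; first exact: idempotentC.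
have aE : a = f + (a - f) by rewrite addrC subrK.
move: (a - f) aE u_unit => u -> u_unit.
have -> : f + u - (1 - f) = f * (1 + u) - (1 - f) * (1 - u).
  rewrite !mulrDr !mulr1 mulrN mulrBl mul1r !opprB addrA [RHS]addrA.
  by rewrite [f + f * u + _]addrACA subrr addr0 addrA.
by apply: JradB; apply: JradMl; apply: uc_Jrad_add1 => //; apply: is_unitN.
Qed.

End UniquelyClean.

Section StarRing.
Variables (R : pzRingType) (s : R -> R).
Hypothesis hs : involution s.
Implicit Types a b e f n u x : R.

Lemma starD a b : s (a + b) = s a + s b. Proof. by case: hs. Qed.
Lemma starM a b : s (a * b) = s b * s a. Proof. by case: hs. Qed.
Lemma starK a : s (s a) = a. Proof. by case: hs. Qed.

Lemma star0 : s 0 = 0.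
Proof. by apply: (addrI (s 0)); rewrite -starD !addr0. Qed.

Lemma starB a b : s (a - b) = s a - s b.
Proof.
rewrite starD; congr (_ + _); apply: (addIr (s b)).
by rewrite -starD !addNr star0.
Qed.

Lemma star1 : s 1 = 1.
Proof. by have := starM (s 1) 1; rewrite mulr1 starK mulr1. Qed.

Lemma is_unit_star u : is_unit u -> is_unit (s u).
Proof. by move=> [v [uv vu]]; exists (s v); rewrite -!starM uv vu star1. Qed.

Lemma Jrad_star x : Jrad x -> Jrad (s x).
Proof.
move=> Jx r; have -> : 1 - r * s x = s (1 - x * s r) by rewrite starB star1 starM starK.
exact/is_unit_star/is_unit_1subC/Jx.
Qed.

Section StronglyJStarClean.
Hypothesis SC : strongly_J_star_clean s.

Lemma sc_projection f : idempotent f -> s f = f.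
Proof.
move=> ff; have [p [j [[pp sp] /in_jacobsonE Jj fE fp]]] := SC f.
suff -> : f = p by [].
by apply: idempotent_eq_Jrad => //; rewrite {1}fE addrC addKr.
Qed.

(* For a corner element n, both e and e + n are projections, so n is
   self-adjoint and n = n^* = (e n)^* = n^* e = n e = 0. *)
Lemma sc_central e x : idempotent e -> e * x = x * e.
Proof.
apply: idempotents_central => {}e n ee en ne.
have sn : s n = n.
  apply: (addrI e); have := sc_projection (idempotentD_corner ee en ne).
  by rewrite starD (sc_projection ee).
by rewrite -sn -en starM sn (sc_projection ee) ne.
Qed.

Lemma sc_uniquely_clean : uniquely_clean R.
Proof.
move=> a; have [p [j [[pp _] /in_jacobsonE Jj aE _]]] := SC a.
exists (1 - p); split.
  split; first exact: idempotentC.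
  pose w := p - (1 - p).
  have ww : w * w = 1.
    rewrite /w mulrBl !mulrBr pp !mulr1 idempotent_mulCr // subrr !subr0 sub0r opprK.
    by rewrite addrC subrK.
  have -> : a - (1 - p) = w * (1 - (- w) * j).
    by rewrite mulNr opprK mulrDr mulr1 mulrA ww mul1r aE /w addrAC.
  by apply: is_unitM; [exists w | apply: Jj].
move=> f [ff f_clean]; symmetry.
apply: (complement_idempotent_eq pp ff (sc_central _ ff) Jj).
by rewrite -aE.
Qed.

Lemma sc_Jrad_subr_star a : Jrad (a - s a).
Proof.
have [p [j [[_ sp] /in_jacobsonE Jj -> _]]] := SC a.
by rewrite starD sp opprD addrACA subrr add0r; apply/JradB/Jrad_star.
Qed.

End StronglyJStarClean.

Lemma uc_sc : uniquely_clean R -> (forall a, Jrad (a - s a)) ->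
  strongly_J_star_clean s.
Proof.
move=> UC Jsub a; have [e [ee Jae]] := uc_clean_Jrad UC a.
have see : idempotent (s e) by rewrite /idempotent -starM ee.
have se : s e = e.
  apply: idempotent_eq_Jrad => //; first exact: uc_central.
  by rewrite -opprB; apply/JradN.
exists e, (a - e); split => //; first by apply/in_jacobsonE.
  by rewrite addrC subrK.
exact/esym/uc_central.
Qed.

End StarRing.

Unset Implicit Arguments.

Theorem lemma3p1 (R : pzRingType) (s : R -> R) (hs : involution s) :
  (strongly_J_star_clean s <->
     (uniquely_clean R /\ forall a : R, in_jacobson (a - s a))) /\
  (strongly_J_star_clean s <->
     (uniquely_clean R /\ forall a : R, in_jacobson (a + s a))).
Proof.
have sc_uc_sub : strongly_J_star_clean s <->
    (uniquely_clean R /\ forall a : R, in_jacobson (a - s a)).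
  split=> [SC | [UC Jsub]].
    split; first exact: sc_uniquely_clean hs SC.
    by move=> a; apply/in_jacobsonE; exact: sc_Jrad_subr_star hs SC a.
  by apply: uc_sc hs UC _ => a; apply/in_jacobsonE.
suff sub_add : (uniquely_clean R /\ forall a : R, in_jacobson (a - s a)) <->
    (uniquely_clean R /\ forall a : R, in_jacobson (a + s a)).
  by split => //; apply: iff_trans sc_uc_sub sub_add.
have addsubE a : a + s a = a - s a + (1 + 1) * s a.
  by rewrite mulrDl mul1r addrA subrK.
split=> -[UC Jsa]; split=> // a; have J2 := uc_Jrad_add1 UC (is_unit1 R).
  by apply/in_jacobsonE; rewrite addsubE; apply/JradD/JradMr/J2/in_jacobsonE.
have /in_jacobsonE := Jsa a; rewrite addsubE => /JradB/(_ (JradMr (s a) J2)).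
by rewrite addrK => /in_jacobsonE.
Qed.
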